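(* Let $\ell$ be a kernel on a set $X$ with the multiplier separation property. Then $\ell$ has the automatic separation property.
   Context: A kernel on $X$ is a positive semi-definite function $\ell:X\times X\to\mathbb{C}$ (with $\ell_z\ne0$ for all $z$); $\mathcal{H}_\ell$ its reproducing kernel Hilbert space, $\ell_w=\ell(\cdot,w)$, $\hat\ell_w=\ell_w/\|\ell_w\|$, $d_\ell(z,w)=\sqrt{1-|\langle\hat\ell_z,\hat\ell_w\rangle|^2}$. $\mathrm{Mult}(\mathcal{H}_\ell)$ is the algebra of functions $\phi$ with $f\mapsto\phi f$ bounded on $\mathcal{H}_\ell$, normed by the operator norm. $\ell$ has the multiplier separation property if for every $\delta>0$ there is $\epsilon>0$ such that for any two points $\lambda\ne\mu$ in $X$ with $d_\ell(\lambda,\mu)>\delta$ there is $\phi\in\mathrm{Mult}(\mathcal{H}_\ell)$ of norm at most $1$ with $\phi(\lambda)=\epsilon$ and $\phi(\mu)=0$. A sequence $\{\lambda_i\}$ is weakly separated by $\ell$ if $d_\ell(\lambda_i,\lambda_j)\ge\epsilon>0$ for $i\ne j$; for $n\ge2$ it is $n$-weakly separated by $\ell$ if there is $\epsilon>0$ such that for every $n$-point subset $\{\mu_1,\dots,\mu_n\}$ of it, $\mathrm{dist}(\hat\ell_{\mu_1},\mathrm{span}\{\hat\ell_{\mu_2},\dots,\hat\ell_{\mu_n}\})\ge\epsilon$. $\ell$ has the automatic separation property if every sequence weakly separated by $\ell$ is $n$-weakly separated by $\ell$ for every $n\ge3$. *)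

From HB Require Import structures.
From mathcomp Require Import all_boot all_order all_algebra.
From mathcomp Require Import reals.
From mathcomp Require Import complex.
Set Implicit Arguments. Unset Strict Implicit. Unset Printing Implicit Defensive.
Import Order.TTheory GRing.Theory Num.Theory.
Local Open Scope ring_scope.
Local Open Scope complex_scope.

Section RKHS.
Variables (R : realType) (X : Type) (l : X -> X -> R[i]).

(* Squared norm of the vector  sum_j b_j l_{x_j}  in H_l:
   < sum_j b_j l_{x_j}, sum_i b_i l_{x_i} > = sum_{i,j} conj(b_i) b_j l(x_i,x_j),
   using <l_w, l_z> = l_w(z) = l(z,w). *)
Definition kform (n : nat) (x : 'I_n -> X) (b : 'I_n -> R[i]) : R[i] :=
  \sum_(i < n) \sum_(j < n) (b i)^* * b j * l (x i) (x j).

Definition combo_norm (n : nat) (x : 'I_n -> X) (b : 'I_n -> R[i]) : R[i] :=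
  sqrtC (kform x b).

(* l is a kernel: positive semi-definite, and l_z <> 0 for every z. *)
Definition is_kernel : Prop :=
  (forall (n : nat) (x : 'I_n -> X) (a : 'I_n -> R[i]), 0 <= kform x a) /\
  (forall z : X, exists w : X, l w z != 0).

(* f belongs to H_l with ||f|| <= c : for every g = sum_j b_j l_{x_j} in the
   (dense) span of the kernel functions, |<f, g>| <= c ||g||, where
   <f, g> = sum_j conj(b_j) f(x_j) (reproducing property).  H_l is the set
   of f for which some such c exists, and ||f|| is the least such c. *)
Definition rkhs_norm_le (f : X -> R[i]) (c : R) : Prop :=
  0 <= c /\
  forall (n : nat) (x : 'I_n -> X) (b : 'I_n -> R[i]),
    `|\sum_(j < n) (b j)^* * f (x j)| ^+ 2 <= (c ^+ 2)%:C * kform x b.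

Definition in_rkhs (f : X -> R[i]) : Prop := exists c : R, rkhs_norm_le f c.

Definition mult_norm_le (phi : X -> R[i]) (C : R) : Prop :=
  forall (f : X -> R[i]) (c : R),
    rkhs_norm_le f c -> rkhs_norm_le (fun z => phi z * f z) (C * c).

(* d_l(z,w) = sqrt(1 - |<hat l_z, hat l_w>|^2), with
   <l_z, l_w> = l(w,z) and ||l_z|| = sqrt(l(z,z)). *)
Definition kdist (z w : X) : R[i] :=
  sqrtC (1 - (`|l w z| / (sqrtC (l z z) * sqrtC (l w w))) ^+ 2).

Definition multiplier_separation_property : Prop :=
  forall delta : R, 0 < delta ->
  exists eps : R, 0 < eps /\
    forall lam mu : X, lam <> mu -> delta%:C < kdist lam mu ->
    exists phi : X -> R[i],
      mult_norm_le phi 1 /\ phi lam = eps%:C /\ phi mu = 0.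

Definition weakly_separated (lam : nat -> X) : Prop :=
  exists eps : R, 0 < eps /\
    forall i j : nat, i <> j -> eps%:C <= kdist (lam i) (lam j).

(* The points mu_0 (playing the role of mu_1), mu_1 .. mu_m of an
   (m+1)-point set; the vector  hat l_{mu_0} - sum_k c_k hat l_{mu_k}
   is the combination with these points and coefficients below. *)
Definition pts (m : nat) (mu0 : X) (mu : 'I_m -> X) (j : 'I_m.+1) : X :=
  if unlift ord0 j is Some k then mu k else mu0.

Definition diffcoef (m : nat) (mu0 : X) (mu : 'I_m -> X) (c : 'I_m -> R[i])
  (j : 'I_m.+1) : R[i] :=
  if unlift ord0 j is Some k then - (c k / sqrtC (l (mu k) (mu k)))
  else 1 / sqrtC (l mu0 mu0).

(* n-weak separation (n >= 2): there is eps > 0 such that for every n-point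
   subset {mu_1,...,mu_n} of the sequence (any labelling),
   dist(hat l_{mu_1}, span{hat l_{mu_2},...,hat l_{mu_n}}) >= eps,
   i.e. || hat l_{mu_1} - sum_k c_k hat l_{mu_k} || >= eps for all c. *)
Definition n_weakly_separated (lam : nat -> X) (n : nat) : Prop :=
  exists eps : R, 0 < eps /\
    forall (i0 : nat) (idx : 'I_n.-1 -> nat),
      injective (fun k => lam (idx k)) ->
      (forall k, lam (idx k) <> lam i0) ->
      forall c : 'I_n.-1 -> R[i],
        eps%:C <= combo_norm (pts (lam i0) (fun k => lam (idx k)))
                             (diffcoef (lam i0) (fun k => lam (idx k)) c).

Definition automatic_separation_property : Prop :=
  forall lam : nat -> X, weakly_separated lam ->
    forall n : nat, (3 <= n)%N -> n_weakly_separated lam n.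

End RKHS.

From HB Require Import structures.
From mathcomp Require Import all_boot all_order all_algebra.
From mathcomp Require Import reals complex.
From mathcomp Require Import ring lra.
Import Order.TTheory GRing.Theory Num.Theory.
Local Open Scope ring_scope.
Local Open Scope complex_scope.
Set Implicit Arguments. Unset Strict Implicit.

(* Multiplying the separating multipliers for the points mu_2, ..., mu_n gives a
   contractive multiplier phi with phi(mu_1) = eps^(n-1) vanishing at mu_2, ..., mu_n.
   Pairing phi * l_{mu_1} with  g = hat l_{mu_1} - sum_k c_k hat l_{mu_k}  kills every
   term but the first, and Cauchy-Schwarz in H_l then gives  eps^(n-1) <= ||g||. *)

Lemma quadratic_ge0_le (R : realType) (a k p q : R) : 0 <= a ->
  (forall u v : R, 0 <= (u ^+ 2 + v ^+ 2) * a + 2 * u * p - 2 * v * q + k) ->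
  p ^+ 2 + q ^+ 2 <= a * k.
Proof.
move=> a_ge0 Hquad.
have k_ge0 : 0 <= k by have := Hquad 0 0; lra.
set N := p ^+ 2 + q ^+ 2.
have [a_gt0 | a_le0] := ltP 0 a.
  have := Hquad (- p / a) (q / a).
  have -> : ((- p / a) ^+ 2 + (q / a) ^+ 2) * a + 2 * (- p / a) * p
              - 2 * (q / a) * q + k = k - N / a.
    by rewrite /N; field; rewrite gt_eqF.
  by rewrite subr_ge0 ler_pdivrMr // mulrC.
have a0 : a = 0 by apply/le_anti; rewrite a_ge0 a_le0.
subst a; rewrite mul0r; have [N_gt0 | //] := ltP 0 N.
(* with a = 0 the form is affine in (u, v), hence unbounded below unless p = q = 0 *)
have := Hquad (- (k + 1) * p / N) ((k + 1) * q / N).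
have -> : ((- (k + 1) * p / N) ^+ 2 + ((k + 1) * q / N) ^+ 2) * 0
            + 2 * (- (k + 1) * p / N) * p - 2 * ((k + 1) * q / N) * q + k = - k - 2.
  by rewrite mulr0 add0r /N; field; rewrite gt_eqF.
lra.
Qed.

Lemma cquadratic_ge0_le (R : realType) (A K s s' : R[i]) : 0 <= A ->
  (forall t, 0 <= t^* * t * A + t^* * s' + t * s + K) -> `|s| ^+ 2 <= A * K.
Proof.
case: A => a a'; case: K => k k'; case: s => p q; case: s' => p' q'.
rewrite lecE /= => /andP[/eqP -> a_ge0] Hquad.
have := Hquad 0; have := Hquad 1; have := Hquad 'i; rewrite !lecE /=.
move=> /andP[/eqP Hi _] /andP[/eqP H1 _] /andP[/eqP H0 _].
have k'0 : k' = 0 by lra.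
have q'E : q' = - q by lra.
have p'E : p' = p by lra.
subst k' q' p'.
apply/andP; split; first by apply/eqP; ring.
rewrite -expr2 sqr_sqrtr; last by nra.
rewrite !mul0r !subr0; apply: quadratic_ge0_le => // u v.
by have := Hquad (u +i* v); rewrite lecE /= => /andP[_]; lra.
Qed.

Section Kernel.
Variables (R : realType) (X : Type) (l : X -> X -> R[i]).

Definition ccons n (t : R[i]) (a : 'I_n -> R[i]) (j : 'I_n.+1) : R[i] :=
  if unlift ord0 j is Some k then a k else t.

Lemma pts0 n z0 (y : 'I_n -> X) : pts z0 y ord0 = z0.
Proof. by rewrite /pts unlift_none. Qed.

Lemma ptsS n z0 (y : 'I_n -> X) k : pts z0 y (lift ord0 k) = y k.
Proof. by rewrite /pts liftK. Qed.

Lemma ccons0 n t (a : 'I_n -> R[i]) : ccons t a ord0 = t.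
Proof. by rewrite /ccons unlift_none. Qed.

Lemma cconsS n t (a : 'I_n -> R[i]) k : ccons t a (lift ord0 k) = a k.
Proof. by rewrite /ccons liftK. Qed.

Lemma diffcoef0 n z0 (y : 'I_n -> X) c :
  diffcoef l z0 y c ord0 = 1 / sqrtC (l z0 z0).
Proof. by rewrite /diffcoef unlift_none. Qed.

Lemma kform_cons n z0 (y : 'I_n -> X) a t :
  kform l (pts z0 y) (ccons t a) =
  t^* * t * l z0 z0 + t^* * (\sum_j a j * l z0 (y j))
  + t * (\sum_i (a i)^* * l (y i) z0) + kform l y a.
Proof.
rewrite /kform big_ord_recl pts0 ccons0 big_ord_recl pts0 ccons0.
under eq_bigr do rewrite ptsS cconsS.
under [X in _ + X = _]eq_bigr do rewrite ptsS cconsS big_ord_recl pts0 ccons0.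
under [X in _ + X = _]eq_bigr do under eq_bigr do rewrite ptsS cconsS.
rewrite big_split /= !mulr_sumr -!addrA; congr (_ + _).
congr (_ + _); first by apply: eq_bigr => i _; ring.
by congr (_ + _); apply: eq_bigr => i _; ring.
Qed.

Lemma rkhs_norm_le_ext f g c :
  f =1 g -> rkhs_norm_le l f c -> rkhs_norm_le l g c.
Proof.
by move=> efg [c_ge0 Hf]; split=> // n x b; under eq_bigr do rewrite -efg; exact: Hf.
Qed.

Lemma mult_norm_le_cst1 : mult_norm_le l (fun _ => 1) 1.
Proof.
move=> f c Hf; rewrite mul1r; apply: rkhs_norm_le_ext Hf => z; by rewrite mul1r.
Qed.

Lemma mult_norm_leM phi psi C D : mult_norm_le l phi C -> mult_norm_le l psi D ->
  mult_norm_le l (fun z => phi z * psi z) (C * D).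
Proof.
move=> Hphi Hpsi f c Hf; have := Hphi _ _ (Hpsi _ _ Hf).
by rewrite mulrA; apply: rkhs_norm_le_ext => z; rewrite mulrA.
Qed.

Lemma mult_prod_vanishing z0 e m (y : 'I_m -> X) :
  (forall k, exists phi,
     mult_norm_le l phi 1 /\ phi z0 = e%:C /\ phi (y k) = 0) ->
  exists phi, mult_norm_le l phi 1 /\ phi z0 = (e ^+ m)%:C /\
              forall k, phi (y k) = 0.
Proof.
elim: m y => [|m IHm] y Hsep.
  exists (fun _ => 1); split; first exact: mult_norm_le_cst1.
  by split; [rewrite expr0 | case].
have [phi [Hphi [phi_z0 phi_y]]] := IHm (fun k => y (lift ord0 k)) (fun k => Hsep _).
have [psi [Hpsi [psi_z0 psi_y]]] := Hsep ord0.
exists (fun z => psi z * phi z); split; first by rewrite -(mulr1 1); exact: mult_norm_leM.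
split; first by rewrite psi_z0 phi_z0 exprS rmorphM.
by move=> k; case: (unliftP ord0 k) => [k'|] ->; rewrite ?phi_y ?psi_y ?mulr0 ?mul0r.
Qed.

Section PositiveKernel.
Hypothesis l_kernel : is_kernel l.

Lemma kernel_diag_ge0 z : 0 <= l z z.
Proof.
have := l_kernel.1 1%N (fun _ => z) (fun _ => 1).
by rewrite /kform !big_ord1 rmorph1 !mul1r.
Qed.

(* the quadratic form in t is kform at the points (z0, y) with first coefficient t *)
Lemma kernel_cauchy_schwarz z0 n (y : 'I_n -> X) a :
  `|\sum_i (a i)^* * l (y i) z0| ^+ 2 <= l z0 z0 * kform l y a.
Proof.
apply: (cquadratic_ge0_le (s' := \sum_j a j * l z0 (y j))).
  exact: kernel_diag_ge0.
by move=> t; rewrite -kform_cons; exact: l_kernel.1.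
Qed.

Lemma kernel_diag_gt0 z : 0 < l z z.
Proof.
have [w lwz_neq0] := l_kernel.2 z.
rewrite lt_def kernel_diag_ge0 andbT; apply/negP => /eqP lzz0.
have := kernel_cauchy_schwarz z (fun _ : 'I_1 => w) (fun _ => 1).
rewrite big_ord1 lzz0 mul0r rmorph1 mul1r -normrX normr_le0 sqrf_eq0.
by rewrite (negbTE lwz_neq0).
Qed.

Lemma sqrt_Re_kernel_diag z : ((Num.sqrt (complex.Re (l z z))) ^+ 2)%:C = l z z.
Proof.
have := kernel_diag_ge0 z; rewrite lecE => /andP[_ Re_ge0].
by rewrite sqr_sqrtr // RRe_real // ger0_real // kernel_diag_ge0.
Qed.

Lemma rkhs_norm_le_kernel z0 :
  rkhs_norm_le l (fun z => l z z0) (Num.sqrt (complex.Re (l z0 z0))).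
Proof.
split=> [|n x b]; first exact: sqrtr_ge0.
rewrite sqrt_Re_kernel_diag; exact: kernel_cauchy_schwarz.
Qed.

Lemma mult_value_le_dist phi z0 m (y : 'I_m -> X) (E : R) c :
  0 <= E -> mult_norm_le l phi 1 -> phi z0 = E%:C -> (forall k, phi (y k) = 0) ->
  E%:C <= combo_norm l (pts z0 y) (diffcoef l z0 y c).
Proof.
move=> E_ge0 Hphi phi_z0 phi_y.
set L := l z0 z0; set K := kform l (pts z0 y) (diffcoef l z0 y c).
have L_gt0 : 0 < L := kernel_diag_gt0 z0.
have K_ge0 : 0 <= K := l_kernel.1 _ _ _.
have E'_ge0 : 0 <= E%:C by rewrite ler0c.
have := (Hphi _ _ (rkhs_norm_le_kernel z0)).2 m.+1 (pts z0 y) (diffcoef l z0 y c).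
rewrite big_ord_recl big1 => [|k _]; last by rewrite ptsS phi_y mul0r mulr0.
rewrite addr0 pts0 diffcoef0 !mul1r sqrt_Re_kernel_diag phi_z0 -/L -/K.
have -> : `|(sqrtC L)^-1^* * (E%:C * L)| ^+ 2 = L * E%:C ^+ 2.
  rewrite normrM exprMn normcJ normfV exprVn -normrX sqrtCK (ger0_norm (ltW L_gt0)).
  rewrite normrM exprMn (ger0_norm E'_ge0) (ger0_norm (ltW L_gt0)).
  by field; rewrite gt_eqF.
rewrite ler_pM2l // => EK.
by rewrite /combo_norm -/K -(sqrCK E'_ge0) ler_sqrtC // nnegrE exprn_ge0.
Qed.

End PositiveKernel.
End Kernel.

Theorem proposition5p3 (R : realType) (X : Type) (l : X -> X -> R[i]) :
  is_kernel l -> multiplier_separation_property l ->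
  automatic_separation_property l.
Proof.
(* the bound below holds for every n *)
move=> l_kernel l_msp lam [e0 [e0_gt0 lam_sep]] n _.
have [eps [eps_gt0 Hsep]] := l_msp (e0 / 2) (divr_gt0 e0_gt0 (ltr0Sn _ _)).
exists (eps ^+ n.-1); split; first exact: exprn_gt0.
move=> i0 idx _ lam_neq c.
have [phi [Hphi [phi_z0 phi_y]]] :
    exists phi, mult_norm_le l phi 1 /\ phi (lam i0) = (eps ^+ n.-1)%:C /\
                forall k, phi (lam (idx k)) = 0.
  apply: mult_prod_vanishing => k; apply: Hsep; first exact: nesym.
  have idx_neq : idx k <> i0 by move=> eki; apply: (lam_neq k); rewrite eki.
  by apply: lt_le_trans (lam_sep _ _ (nesym idx_neq)); rewrite ltcR; lra.
apply: (mult_value_le_dist l_kernel c _ Hphi phi_z0 phi_y).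
by rewrite exprn_ge0 // ltW.
Qed.
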